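(* Let $q$ be a square with $\operatorname{char}(\mathbb{F}_q)\neq 2$, and let $X=\{F=0\}\subset\mathbb{P}^n$ be a reduced Frobenius nonclassical hypersurface over $\mathbb{F}_q$ of degree $\sqrt q+1$ such that $F_{1,0}=cF^{\sqrt q}$ for some nonzero constant $c$. Then $X$ is Hermitian.
   Context: $F\in\mathbb{F}_q[x_0,\dots,x_n]$ is homogeneous, $F_{1,0}:=\sum_{i=0}^n x_i^q\frac{\partial F}{\partial x_i}$, and $X$ is Frobenius nonclassical if $F$ divides $F_{1,0}$; reduced means $F$ is squarefree. A Hermitian variety is a hypersurface defined by $\overline{\mathbf{x}}\cdot H\cdot\mathbf{x}^t$ where $\mathbf{x}=(x_0,\dots,x_n)$, $\overline{a}=a^{\sqrt q}$ applied entrywise, and $H$ is a nonzero matrix over $\mathbb{F}_q$ with $\overline{H}^t=H$ (equivalently, projectively equivalent over $\mathbb{F}_q$ to $\sum_{i=0}^r x_i^{\sqrt q+1}=0$ for some $0\le r\le n$). *)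

From HB Require Import structures.
From mathcomp Require Import all_boot all_order all_algebra all_field.
From mathcomp Require Import mpoly.
Set Implicit Arguments. Unset Strict Implicit. Unset Printing Implicit Defensive.
Import GRing.Theory.
Local Open Scope ring_scope.

Definition frob10 (K : fieldType) (n q : nat) (F : {mpoly K[n.+1]}) : {mpoly K[n.+1]} :=
  \sum_(i < n.+1) 'X_i ^+ q * mderiv i F.

Definition mdvd (K : fieldType) (m : nat) (G F : {mpoly K[m]}) : Prop :=
  exists H : {mpoly K[m]}, F = G * H.

(* reduced = squarefree: no nonconstant square divides F *)
Definition squarefree (K : fieldType) (m : nat) (F : {mpoly K[m]}) : Prop :=
  forall G : {mpoly K[m]}, mdvd (G * G) F -> (msize G <= 1)%N.

Definition frob_nonclassical (K : fieldType) (n q : nat) (F : {mpoly K[n.+1]}) : Prop :=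
  mdvd F (frob10 q F).

(* The Hermitian polynomial  xbar . H . x^t  with  abar = a^s  (s = sqrt q) *)
Definition herm_poly (K : fieldType) (n s : nat) (H : 'M[K]_n.+1) : {mpoly K[n.+1]} :=
  \sum_(i < n.+1) \sum_(j < n.+1) ('X_i ^+ s * (H i j)%:MP * 'X_j).

Definition hermitian_mx (K : fieldType) (n s : nat) (H : 'M[K]_n.+1) : Prop :=
  forall i j, H j i ^+ s = H i j.

(* X = {F = 0} is Hermitian: F defines the same hypersurface as a Hermitian
   polynomial, i.e. F is a nonzero scalar multiple of one. *)
Definition is_hermitian (K : fieldType) (n s : nat) (F : {mpoly K[n.+1]}) : Prop :=
  exists (lam : K) (H : 'M[K]_n.+1),
    [/\ lam != 0, H != 0, hermitian_mx s H & F = lam *: herm_poly s H].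

From HB Require Import structures.
From mathcomp Require Import all_boot all_order all_algebra all_field.
From mathcomp Require Import mpoly.
From mathcomp Require Import abelian zify ring.
Import GRing.Theory.
Local Open Scope ring_scope.

(* Write q = s^2 and compare coefficients in F_{1,0} = c F^s.  The right-hand
   side lives on monomials u^s, while the coefficient of F_{1,0} at x_j^q x^m,
   with m_k < q for k <> j, is (m_j + 1) F_{m + e_j}.  Since deg F = s + 1 = 1
   in K, each monomial x^m of F has an exponent m_i that is nonzero in K, and
   reading off the coefficient at x_i^q x^(m - e_i) forces x^m = x_a^s x_i.
   Hence F = sum A_ab x_a^s x_b, and the coefficient at (x_b^s x_a)^s gives
   A_ab = c A_ba^s.  For a suitable t the element z = t A_ab + t^s A_ba is
   nonzero and, as t^q = t, satisfies z = c z^s; then z^-1 A is Hermitian. *)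

Lemma card_sqr_gt1 {K : finFieldType} {s : nat} : #|K| = (s * s)%N -> (1 < s)%N.
Proof. by have := finNzRing_gt1 K => /[swap] ->; case: s => [|[|s]]. Qed.

Lemma finField_pchar_nat_card (K : finFieldType) : [pchar K].-nat #|K|.
Proof.
have [p p_pr pK] := finPcharP K.
have /and3P[pK_group _ _] := fin_ring_pchar_abelem pK.
by rewrite -cardsT (eq_pnat _ (pcharf_eq pK)).
Qed.

Lemma card_sqr_pchar_nat {K : finFieldType} {s : nat} :
  #|K| = (s * s)%N -> [pchar K].-nat s.
Proof.
by move=> hK; apply: pnat_dvd (finField_pchar_nat_card K); rewrite hK dvdn_mulr.
Qed.

Lemma pchar_nat_natr_eq0 (R : nzRingType) (s : nat) :
  [pchar R].-nat s -> (1 < s)%N -> s%:R = 0 :> R.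
Proof.
move=> pchar_s s_gt1.
have pdiv_pchar : pdiv s \in [pchar R] by apply: pnatPpi pchar_s _; rewrite pi_pdiv.
by apply/eqP; rewrite -(dvdn_pcharf pdiv_pchar) pdiv_dvd.
Qed.

Section MpolyFrobenius.
Context {K : fieldType} {n s : nat}.
Hypothesis s_gt0 : (0 < s)%N.

Lemma mulmnI : injective (fun m : 'X_{1..n} => (m *+ s)%MM).
Proof.
move=> u v /mnmP eq_us_vs; apply/mnmP => i.
by apply/eqP; rewrite -(eqn_pmul2r s_gt0) -!mulmnE eq_us_vs.
Qed.

Hypothesis pchar_s : [pchar K].-nat s.

Lemma mpoly_exp_pchar (F : {mpoly K[n]}) :
  F ^+ s = \sum_(m <- msupp F) F@_m ^+ s *: 'X_[m *+ s].
Proof.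
have pchar_mpoly_s : [pchar {mpoly K[n]}].-nat s.
  by rewrite (eq_pnat _ (pchar_lalg _)).
have exprD_s (x y : {mpoly K[n]}) : (x + y) ^+ s = x ^+ s + y ^+ s by apply: exprDn_pchar.
rewrite {1}(mpolyE F) (big_morph _ exprD_s (expr0n _ _)).
rewrite (negPf (lt0n_neq0 s_gt0)); apply: eq_bigr => m _.
by rewrite exprZn mpolyXn.
Qed.

Lemma mcoeff_exp_pchar (F : {mpoly K[n]}) m : (F ^+ s)@_(m *+ s) = F@_m ^+ s.
Proof.
rewrite mpoly_exp_pchar raddf_sum /=.
under eq_bigr do rewrite mcoeffZ mcoeffX (inj_eq mulmnI).
have [m_supp|m_nsupp] := boolP (m \in msupp F).
  rewrite (bigD1_seq m) ?msupp_uniq //= eqxx mulr1 big1 ?addr0 // => m' m'_neq.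
  by rewrite (negPf m'_neq) mulr0.
rewrite big1_seq => [|m' /andP[_ m'_supp]]; last first.
  by case: eqP m'_supp m_nsupp => [->->|_ _ _]; rewrite ?mulr0.
move: m_nsupp; rewrite mcoeff_msupp negbK => /eqP->.
by rewrite expr0n (negPf (lt0n_neq0 s_gt0)).
Qed.

Lemma mcoeff_exp_pchar_neq0 (F : {mpoly K[n]}) M :
  (F ^+ s)@_M != 0 -> exists m, M = (m *+ s)%MM.
Proof.
rewrite mpoly_exp_pchar raddf_sum /=.
have [/hasP[m _ /eqP <-]|/hasPn no_m] :=
  boolP (has (fun m => (m *+ s)%MM == M) (msupp F)).
  by exists m.
rewrite big1_seq ?eqxx // => m /andP[_ m_supp].
by rewrite mcoeffZ mcoeffX (negPf (no_m m m_supp)) mulr0.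
Qed.

End MpolyFrobenius.

Lemma mcoeff_XnM_lt (K : fieldType) n q (G : {mpoly K[n]}) (k : 'I_n)
    (M : 'X_{1..n}) :
  (M k < q)%N -> ('X_k ^+ q * G)@_M = 0.
Proof.
move=> Mk_lt; rewrite mpolyXn mcoeffM big1 // => -[u v] /= /eqP M_eq.
rewrite mcoeffX; case: eqP => [u_eq|]; last by rewrite mul0r.
suff : (q <= M k)%N by rewrite leqNgt Mk_lt.
by rewrite M_eq mnmDE -u_eq mulmnE mnm1E eqxx mul1n leq_addr.
Qed.

Lemma mcoeff_frob10 (K : fieldType) n q (F : {mpoly K[n.+1]}) (j : 'I_n.+1)
    (m : 'X_{1..n.+1}) :
  (forall k, k != j -> m k < q)%N ->
  (frob10 q F)@_(U_(j) *+ q + m) = F@_(m + U_(j)) *+ (m j).+1.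
Proof.
move=> m_lt; rewrite /frob10 raddf_sum (bigD1 j) //= big1 ?addr0 => [|k k_neq].
  by rewrite mulrC mpolyXn mcoeffMX mcoeff_mderiv.
apply: mcoeff_XnM_lt; rewrite mnmDE mulmnE mnm1E eq_sym (negPf k_neq) mul0n.
exact: m_lt.
Qed.

Definition herm_mnm {n : nat} (s : nat) (i j : 'I_n) : 'X_{1..n} :=
  (U_(i) *+ s + U_(j))%MM.

Section Monomials.
Context {n : nat}.
Implicit Types (m u : 'X_{1..n}) (s : nat) (i j k a b : 'I_n).

Lemma herm_mnmE s i j k : herm_mnm s i j k = ((i == k) * s + (j == k))%N.
Proof. by rewrite mnmDE mulmnE !mnm1E. Qed.

Lemma herm_mnmI s i j a b :
  (1 < s)%N -> herm_mnm s i j = herm_mnm s a b -> i = a /\ j = b.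
Proof.
move=> s_gt1 eq_ij_ab; have s_gt0 := ltnW s_gt1.
have small (x k : 'I_n) : ((x == k) < s)%N by case: (x == k).
have := congr1 (fun m => (m i %/ s)%N) eq_ij_ab.
have := congr1 (fun m => (m j %% s)%N) eq_ij_ab.
rewrite /= !herm_mnmE !divnMDl // !modnMDl !divn_small // !modn_small // !eqxx !addn0.
by case: (b =P j) => // ->; case: (a =P i) => // ->.
Qed.

Lemma mnm_le_mdeg m k : (m k <= mdeg m)%N.
Proof. by rewrite mdegE (bigD1 k) //= leq_addr. Qed.

Lemma herm_mnm_of_mulmn s m u (i : 'I_n) :
  (0 < s)%N -> mdeg (m + U_(i)) = s.+1 ->
  (U_(i) *+ (s * s) + m)%MM = (u *+ s)%MM ->
  exists a, (m + U_(i))%MM = herm_mnm s a i.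
Proof.
move=> s_gt0 deg_m /mnmP m_eq; set w := (u - U_(i) *+ s)%MM.
have m_w : m = (w *+ s)%MM.
  apply/mnmP => k; have := m_eq k.
  rewrite !(mnmDE, mnmBE, mulmnE, mnm1E) mulnBl -mulnA => <-.
  by rewrite addKn.
have /mdeg1P[a /eqP w_a] : mdeg w == 1%N.
  move: deg_m; rewrite m_w mdegD mdegMn mdeg1 addn1 => -[].
  by rewrite -{2}[s]mul1n => /eqP; rewrite eqn_pmul2r.
by exists a; rewrite m_w w_a.
Qed.

End Monomials.

Section FrobeniusIdentity.
Context {K : fieldType} {n s : nat} {c : K} {F : {mpoly K[n.+1]}}.
Hypotheses (pchar_s : [pchar K].-nat s) (s_gt1 : (1 < s)%N).
Hypothesis frob10_F : frob10 (s * s) F = c *: F ^+ s.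

Let s_gt0 : (0 < s)%N. Proof. exact: ltnW. Qed.
Let s_eq0 : s%:R = 0 :> K. Proof. exact: pchar_nat_natr_eq0. Qed.

Lemma mcoeff_herm_frob10 i j : F@_(herm_mnm s i j) = c * F@_(herm_mnm s j i) ^+ s.
Proof.
have herm_mulmn : (herm_mnm s j i *+ s)%MM = (U_(j) *+ (s * s) + U_(i) *+ s)%MM.
  by apply/mnmP => k; rewrite mnmDE !mulmnE !mnm1E herm_mnmE mulnDl mulnA.
have := congr1 (mcoeff (herm_mnm s j i *+ s)) frob10_F.
rewrite mcoeffZ mcoeff_exp_pchar // herm_mulmn mcoeff_frob10 => [<-|k k_neq]; last first.
  by rewrite mulmnE mnm1E ltn_pmul2r //; case: (i == k).
by rewrite mulmnE mnm1E mulrSr mulrnA -mulr_natr s_eq0 mulr0 add0r.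
Qed.

Hypothesis homF : F \is s.+1.-homog.

Lemma msupp_herm m : F@_m != 0 -> exists i j, m = herm_mnm s i j.
Proof.
move=> Fm_neq0; have deg_m : mdeg m = s.+1.
  by apply: (dhomog_mf homF); rewrite mcoeff_msupp.
have [i mi_neq0] : exists i, (m i)%:R != 0 :> K.
  apply/existsP; apply: contraT; rewrite negb_exists => /forallP mi_eq0.
  have : (mdeg m)%:R != 0 :> K by rewrite deg_m -addn1 natrD s_eq0 add0r oner_eq0.
  rewrite mdegE natr_sum big1 ?eqxx // => k _.
  by apply/eqP; rewrite -[_ == _]negbK mi_eq0.
have mi_gt0 : (0 < m i)%N by rewrite lt0n; apply: contraNneq mi_neq0 => ->.
set m' := (m - U_(i))%MM.
have m'_i : (m' + U_(i))%MM = m by rewrite submK // lep1mP -lt0n.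
have frob_m : (frob10 (s * s) F)@_(U_(i) *+ (s * s) + m') = F@_m *+ m i.
  rewrite mcoeff_frob10 => [|k k_neq].
    by rewrite m'_i mnmBE mnm1E eqxx subn1 prednK.
  rewrite mnmBE mnm1E eq_sym (negPf k_neq) subn0.
  by have := mnm_le_mdeg m k; rewrite deg_m; nia.
have [u u_eq] : exists u, (U_(i) *+ (s * s) + m')%MM = (u *+ s)%MM.
  apply: (mcoeff_exp_pchar_neq0 s_gt0 pchar_s F).
  have : F@_m *+ m i != 0 by rewrite -mulr_natr mulf_neq0.
  by rewrite -frob_m frob10_F mcoeffZ mulf_eq0 negb_or => /andP[].
have deg_m' : mdeg (m' + U_(i)) = s.+1 by rewrite m'_i.
have [a m_herm] := herm_mnm_of_mulmn s m' u i s_gt0 deg_m' u_eq.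
by exists a, i; rewrite -m'_i.
Qed.

End FrobeniusIdentity.

Section HermPoly.
Context {K : fieldType} {n s : nat}.
Implicit Types (H : 'M[K]_n.+1) (F : {mpoly K[n.+1]}).

Lemma herm_polyE H :
  herm_poly s H = \sum_i \sum_j H i j *: 'X_[herm_mnm s i j].
Proof.
apply: eq_bigr => i _; apply: eq_bigr => j _.
by rewrite (mulrC _ (H i j)%:MP) mul_mpolyC -scalerAl mpolyXn -mpolyXD.
Qed.

Lemma herm_polyZ a H : herm_poly s (a *: H) = a *: herm_poly s H.
Proof.
rewrite !herm_polyE scaler_sumr; apply: eq_bigr => i _.
by rewrite scaler_sumr; apply: eq_bigr => j _; rewrite mxE scalerA.
Qed.

Lemma mcoeff_herm_poly H m :
  (herm_poly s H)@_m = \sum_i \sum_j H i j * (herm_mnm s i j == m)%:R.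
Proof.
rewrite herm_polyE raddf_sum; apply: eq_bigr => i _.
by rewrite raddf_sum; apply: eq_bigr => j _; rewrite /= mcoeffZ mcoeffX.
Qed.

Lemma mcoeff_herm_poly_herm H a b :
  (1 < s)%N -> (herm_poly s H)@_(herm_mnm s a b) = H a b.
Proof.
move=> s_gt1; rewrite mcoeff_herm_poly (bigD1 a) //= (bigD1 b) //= eqxx mulr1.
rewrite !big1 ?addr0 // => [i i_neq|j j_neq].
  rewrite big1 // => j _; case: eqP => [/herm_mnmI[] // eq_ia|]; last by rewrite mulr0.
  by rewrite eq_ia eqxx in i_neq.
case: eqP => [/herm_mnmI[] // _ eq_jb|]; last by rewrite mulr0.
by rewrite eq_jb eqxx in j_neq.
Qed.

Lemma mcoeff_herm_poly_eq0 H m :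
  (forall i j, m != herm_mnm s i j) -> (herm_poly s H)@_m = 0.
Proof.
move=> not_herm; rewrite mcoeff_herm_poly big1 // => i _; rewrite big1 // => j _.
by rewrite eq_sym (negPf (not_herm i j)) mulr0.
Qed.

Lemma herm_poly_mcoeff F :
  (1 < s)%N -> (forall m, F@_m != 0 -> exists i j, m = herm_mnm s i j) ->
  F = herm_poly s (\matrix_(i, j) F@_(herm_mnm s i j)).
Proof.
move=> s_gt1 supp_herm; apply/mpolyP => m.
have [/existsP[a /existsP[b /eqP->]]|not_herm] :=
  boolP [exists i, exists j, m == herm_mnm s i j].
  by rewrite mcoeff_herm_poly_herm // mxE.
have m_not_herm i j : m != herm_mnm s i j.
  apply: contraNneq not_herm => ->.
  by apply/existsP; exists i; apply/existsP; exists j.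
rewrite mcoeff_herm_poly_eq0 //; apply/eqP; apply: contraT => /supp_herm[i [j m_herm]].
by have := m_not_herm i j; rewrite m_herm eqxx.
Qed.

End HermPoly.

Lemma hermitian_scale_twisted {K : fieldType} {n s : nat} {A : 'M[K]_n.+1}
    {c z : K} :
  c != 0 -> z != 0 -> z = c * z ^+ s -> (forall i j, A i j = c * A j i ^+ s) ->
  hermitian_mx s (z^-1 *: A).
Proof.
move=> c_neq0 z_neq0 z_fixed A_twisted i j.
have zs_neq0 : z ^+ s != 0 by rewrite expf_neq0.
rewrite !mxE exprMn exprVn (A_twisted i j) [in RHS]z_fixed.
by field; rewrite zs_neq0 c_neq0.
Qed.

Lemma exists_pow_neq (K : finFieldType) s : (1 < s)%N -> (s < #|K|)%N ->
  exists t : K, t ^+ s != t.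
Proof.
move=> s_gt1 s_lt_card; apply/existsP; apply: contraT; rewrite negb_exists.
move=> /forallP all_fixed.
have p_neq0 : ('X^s - 'X : {poly K}) != 0.
  rewrite subr_eq0; apply/eqP => Xs_eq_X.
  by have := size_polyXn K s; rewrite Xs_eq_X size_polyX; lia.
have := max_poly_roots p_neq0 _ (enum_uniq (pred_of_simpl (@predT K))).
rewrite size_polyDl ?size_polyXn ?size_polyN ?size_polyX //.
rewrite -cardE ltnS leqNgt s_lt_card.
apply; apply/allP => t _; rewrite rootE !hornerE subr_eq0.
by have := all_fixed t; rewrite negbK.
Qed.

Lemma exists_twisted_frob_fixed {K : finFieldType} {s : nat} {c x y : K} :
  #|K| = (s * s)%N -> x = c * y ^+ s -> y = c * x ^+ s -> x != 0 ->
  exists2 z : K, z != 0 & z = c * z ^+ s.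
Proof.
move=> card_K x_eq y_eq x_neq0.
have s_gt1 := card_sqr_gt1 card_K.
pose w t := t * x + t ^+ s * y.
have w_fixed t : c * w t ^+ s = w t.
  rewrite exprDn_pchar ?card_sqr_pchar_nat // !exprMn -exprM -card_K expf_card.
  transitivity (t * (c * y ^+ s) + t ^+ s * (c * x ^+ s)); first ring.
  by rewrite -x_eq -y_eq.
suff [t wt_neq0] : exists t, w t != 0 by exists (w t); rewrite ?w_fixed.
have [y_eq_Nx|] := eqVneq y (- x); last first.
  by exists 1; rewrite /w expr1n !mul1r addrC addr_eq0.
have [t ts_neq_t] : exists t : K, t ^+ s != t.
  apply: exists_pow_neq => //.
  by rewrite card_K -{1}[s]muln1 ltn_pmul2l // ltnW.
by exists t; rewrite /w y_eq_Nx mulrN -mulrBl mulf_neq0 // subr_eq0 eq_sym.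
Qed.

Theorem corollary3p16 (K : finFieldType) (s n : nat) (F : {mpoly K[n.+1]}) (c : K) :
  #|K| = (s * s)%N ->
  (2%:R : K) != 0 ->
  F != 0 ->
  F \is (s.+1).-homog ->
  squarefree F ->
  frob_nonclassical #|K| F ->
  c != 0 ->
  frob10 #|K| F = c *: F ^+ s ->
  is_hermitian s F.
Proof.
move=> card_K _ F_neq0 homF _ _ c_neq0 frob10_F.
have s_gt1 := card_sqr_gt1 card_K.
have pchar_s := card_sqr_pchar_nat card_K.
rewrite card_K in frob10_F.
have supp_herm := msupp_herm pchar_s s_gt1 frob10_F homF.
pose A := \matrix_(i, j) F@_(herm_mnm s i j) : 'M[K]_n.+1.
have A_twisted i j : A i j = c * A j i ^+ s.
  by rewrite !mxE; exact: (mcoeff_herm_frob10 pchar_s s_gt1 frob10_F).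
have F_A : F = herm_poly s A by apply: herm_poly_mcoeff.
have [a [b mlead_herm]] : exists a b, mlead F = herm_mnm s a b.
  by apply: supp_herm; rewrite mleadc_eq0.
have Aab_neq0 : A a b != 0 by rewrite mxE -mlead_herm mleadc_eq0.
have [z z_neq0 z_fixed] :=
  exists_twisted_frob_fixed card_K (A_twisted a b) (A_twisted b a) Aab_neq0.
exists z, (z^-1 *: A); split.
- exact: z_neq0.
- rewrite scaler_eq0 invr_eq0 negb_or z_neq0 /=.
  by apply: contraNneq Aab_neq0 => ->; rewrite mxE.
- exact: hermitian_scale_twisted c_neq0 z_neq0 z_fixed A_twisted.
- by rewrite herm_polyZ scalerA divff // scale1r -F_A.
Qed.
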